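(* Let $\phi:[\tau,\tau+1]\to\mathbb R$ be right-continuous with finitely many discontinuities, continuously differentiable between them, with $\phi(\tau)\ge0$, and let $\phi^+=\sup_{t\in[\tau,\tau+1]}\phi(t)$. Let $0<\nu\le1$, $\gamma\ge0$, $M\ge0$, and $\mu,a_1,a_2,a_3\ge0$ with $\mu a_1<1$. Suppose that at every point of differentiability $\frac{d\phi}{dt}\le-\nu\phi+\gamma$, and that the sum over all discontinuity points $t$ of the positive parts $\max\{0,\phi(t)-\phi(t^-)\}$ is at most $\mu(a_1\phi^++a_2\phi(\tau)+a_3M)$. If \[ \mu\Big[\frac{a_1(1+\mu a_2)}{1-\mu a_1}+a_2\Big]\le\frac\nu8\quad\text{and}\quad\phi(\tau)\ge\frac{8\mu}{\nu}\,a_3M\,\frac1{1-\mu a_1}, \] then $\phi(\tau+1)\le\big(1-\frac\nu4\big)\phi(\tau)+\frac{\gamma}{1-\mu a_1}$. *)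

From Stdlib Require Import Reals Lra List.
Open Scope R_scope.

Definition right_cont_at (phi : R -> R) (t : R) : Prop :=
  forall eps, 0 < eps -> exists delta, 0 < delta /\
    forall s, t <= s < t + delta -> Rabs (phi s - phi t) < eps.

Definition left_limit (phi : R -> R) (t L : R) : Prop :=
  forall eps, 0 < eps -> exists delta, 0 < delta /\
    forall s, t - delta < s < t -> Rabs (phi s - L) < eps.

Definition jump_sum (phi phim : R -> R) (D : list R) : R :=
  fold_right (fun t acc => Rmax 0 (phi t - phim t) + acc) 0 D.

From Stdlib Require Import Reals Lra List.
Open Scope R_scope.

(* The positive jumps of phi up to time t add up to K(t).  With g = gamma / nu,
   real induction on [tau, tau + 1] gives e^(nu (t - tau)) (phi(t) - g - K(t)) <= phi(tau) - g:
   between jumps the differential inequality makes the left side decrease, and at a jump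
   K absorbs the positive part.  Hence phi(t) <= e^(-nu (t - tau)) phi(tau) + gamma + J with J
   the total jump sum.  At the supremum this gives phi+ <= phi(tau) + gamma + J, so the
   hypothesis on J yields (1 - mu a1) J <= (1 - mu a1) (nu/4) phi(tau) + mu a1 gamma, and
   e^(-nu) <= 1 - nu/2 at t = tau + 1 concludes. *)

Lemma right_cont_at_limit1_in f c :
  right_cont_at f c <-> limit1_in f (fun s => c <= s) (f c) c.
Proof.
  unfold limit1_in, limit_in, right_cont_at; simpl; unfold Rdist; split.
  - intros H eps Heps; destruct (H eps Heps) as [d [Hd Hs]].
    exists d; split; [exact Hd|]; intros s [Hcs Hsd]; apply Hs.
    apply Rabs_def2 in Hsd; lra.
  - intros H eps Heps; destruct (H eps Heps) as [d [Hd Hs]].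
    exists d; split; [exact Hd|]; intros s Hsd; apply Hs.
    split; [lra|]; apply Rabs_def1; lra.
Qed.

Lemma left_limit_limit1_in f c L :
  left_limit f c L <-> limit1_in f (fun s => s < c) L c.
Proof.
  unfold limit1_in, limit_in, left_limit; simpl; unfold Rdist; split.
  - intros H eps Heps; destruct (H eps Heps) as [d [Hd Hs]].
    exists d; split; [exact Hd|]; intros s [Hcs Hsd]; apply Hs.
    apply Rabs_def2 in Hsd; lra.
  - intros H eps Heps; destruct (H eps Heps) as [d [Hd Hs]].
    exists d; split; [exact Hd|]; intros s Hsd; apply Hs.
    split; [lra|]; apply Rabs_def1; lra.
Qed.

Lemma continuity_pt_limit1_in f c (Dom : R -> Prop) :
  continuity_pt f c -> limit1_in f Dom (f c) c.
Proof.
  intros H eps Heps; destruct (H eps Heps) as [d [Hd Hs]].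
  exists d; split; [exact Hd|]; intros s [_ Hsd].
  destruct (Req_dec_T c s) as [<-|Hne].
  - simpl; unfold Rdist; rewrite Rminus_diag, Rabs_R0; exact Heps.
  - apply Hs; split; [split; [exact I|exact Hne]|exact Hsd].
Qed.

Lemma limit1_in_scale_shift g f (Dom : R -> Prop) k l c :
  continuity_pt g c -> limit1_in f Dom l c ->
  limit1_in (fun t => g t * (f t + k)) Dom (g c * (l + k)) c.
Proof.
  intros Hg Hf; apply limit_mul; [exact (continuity_pt_limit1_in g c Dom Hg)|].
  apply limit_plus; [exact Hf|exact (limit_free (fun _ => k) Dom 0 c)].
Qed.

Lemma left_limit_continuity_pt f c : continuity_pt f c -> left_limit f c (f c).
Proof. intros H; apply left_limit_limit1_in, continuity_pt_limit1_in, H. Qed.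

Lemma right_cont_at_le f c s : c < s -> right_cont_at f c ->
  (forall r, c < r <= s -> f s <= f r) -> f s <= f c.
Proof.
  intros Hcs Hf Hmono; apply Rnot_lt_le; intro Hlt.
  destruct (Hf (f s - f c)) as [d [Hd Hr]]; [lra|].
  set (r := c + Rmin d (s - c) / 2).
  assert (Hmin := Rmin_pos d (s - c) Hd ltac:(lra)).
  pose proof (Rmin_l d (s - c)); pose proof (Rmin_r d (s - c)).
  assert (Hr' := Hr r ltac:(unfold r; lra)); apply Rabs_def2 in Hr'.
  assert (Hs := Hmono r ltac:(unfold r; lra)); lra.
Qed.

Lemma left_limit_le f c L B : left_limit f c L ->
  (exists d, 0 < d /\ forall s, c - d < s < c -> f s <= B) -> L <= B.
Proof.
  intros Hf [d [Hd Hle]]; apply Rnot_lt_le; intro Hlt.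
  destruct (Hf (L - B)) as [d' [Hd' Hs]]; [lra|].
  set (s := c - Rmin d d' / 2).
  assert (Hmin := Rmin_pos d d' Hd Hd').
  pose proof (Rmin_l d d'); pose proof (Rmin_r d d').
  assert (Hs' := Hs s ltac:(unfold s; lra)); apply Rabs_def2 in Hs'.
  assert (Hb := Hle s ltac:(unfold s; lra)); lra.
Qed.

Lemma nonincreasing_of_derivative_nonpos (w w' : R -> R) a b :
  (forall x, a < x < b -> derivable_pt_lim w x (w' x) /\ w' x <= 0) ->
  forall x y, a < x -> x <= y -> y < b -> w y <= w x.
Proof.
  intros H x y Hx [Hxy| ->] Hy; [|lra].
  destruct (MVT_cor2 w w' x y Hxy) as [c [Hc Hcxy]].
  - intros z Hz; apply H; lra.
  - assert (w' c <= 0) by (apply H; lra); nra.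
Qed.

Lemma real_induction (w : R -> R) a b B : a <= b -> w a <= B ->
  (forall c, a <= c < b -> exists d, 0 < d /\ forall s, c < s < c + d -> w s <= w c) ->
  (forall c, a < c <= b -> (exists d, 0 < d /\ forall s, c - d < s < c -> w s <= B) ->
     w c <= B) ->
  forall t, a <= t <= b -> w t <= B.
Proof.
  intros Hab Ha Hright Hleft.
  set (S := fun t => a <= t <= b /\ forall s, a <= s <= t -> w s <= B).
  assert (Sa : S a) by (split; [lra|intros s Hs; replace s with a by lra; exact Ha]).
  destruct (completeness S) as [c [Hub Hlub]];
    [exists b; intros t [Ht _]; lra | exists a; exact Sa|].
  assert (Hac : a <= c) by (apply Hub, Sa).
  assert (Hcb : c <= b) by (apply Hlub; intros t [Ht _]; lra).
  assert (below : forall s, a <= s < c -> w s <= B).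
  { intros s Hs; destruct (Rle_dec (w s) B) as [|Hws]; [assumption|exfalso].
    assert (c <= s); [|lra].
    apply Hlub; intros t [Ht Hw]; apply Rnot_lt_le; intro Hst; apply Hws, Hw; lra. }
  assert (Sc : S c).
  { split; [lra|]; intros s Hs.
    destruct (Req_dec_T s c) as [->|Hne]; [|apply below; lra].
    destruct (Req_dec_T c a) as [->|Hca]; [exact Ha|].
    apply Hleft; [lra|]; exists (c - a); split; [lra|]; intros s' Hs'; apply below; lra. }
  destruct (Rle_lt_or_eq_dec c b Hcb) as [Hlt| ->]; [exfalso|intros t Ht; apply Sc; lra].
  destruct (Hright c ltac:(lra)) as [d [Hd Hdec]].
  set (c' := Rmin (c + d / 2) b).
  assert (Hc'd : c' <= c + d / 2) by apply Rmin_l.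
  assert (Hc'b : c' <= b) by apply Rmin_r.
  assert (Hcc' : c < c') by (apply Rmin_glb_lt; lra).
  assert (Sc' : S c').
  { split; [lra|]; intros s Hs; destruct (Rle_dec s c).
    - apply Sc; lra.
    - apply Rle_trans with (w c); [apply Hdec; lra|apply Sc; lra]. }
  pose proof (Hub c' Sc'); lra.
Qed.

Lemma finite_set_isolated (D : list R) c :
  exists d, 0 < d /\ forall x, In x D -> x <> c -> d <= Rabs (x - c).
Proof.
  induction D as [|y D [d [Hd Hiso]]]; [exists 1; split; [lra|intros x []]|].
  destruct (Req_dec_T y c) as [<-|Hyc].
  - exists d; split; [exact Hd|]; intros x [<-|Hx] Hxc; [congruence|exact (Hiso x Hx Hxc)].
  - assert (Hy : 0 < Rabs (y - c)) by (apply Rabs_pos_lt; lra).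
    exists (Rmin d (Rabs (y - c))); split; [apply Rmin_pos; lra|].
    intros x [<-|Hx] Hxc; [apply Rmin_r|].
    apply Rle_trans with d; [apply Rmin_l|exact (Hiso x Hx Hxc)].
Qed.

Section PartialSums.

Variable j : R -> R.
Hypothesis j_ge0 : forall x, 0 <= j x.

Definition sum_upto (D : list R) (t : R) : R :=
  fold_right (fun x acc => (if Rle_dec x t then j x else 0) + acc) 0 D.

Definition sum_at (D : list R) (c : R) : R :=
  fold_right (fun x acc => (if Req_dec_T x c then j x else 0) + acc) 0 D.

Lemma sum_upto_ge0 D t : 0 <= sum_upto D t.
Proof.
  induction D as [|x D IH]; simpl; [lra|].
  destruct (Rle_dec x t); pose proof (j_ge0 x); lra.
Qed.

Lemma sum_upto_le_total D t :
  sum_upto D t <= fold_right (fun x acc => j x + acc) 0 D.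
Proof.
  induction D as [|x D IH]; simpl; [lra|].
  destruct (Rle_dec x t); pose proof (j_ge0 x); lra.
Qed.

Lemma sum_at_ge0 D c : 0 <= sum_at D c.
Proof.
  induction D as [|x D IH]; simpl; [lra|].
  destruct (Req_dec_T x c); pose proof (j_ge0 x); lra.
Qed.

Lemma sum_at_ge D c : In c D -> j c <= sum_at D c.
Proof.
  induction D as [|x D IH]; simpl; [tauto|].
  intros Hc; pose proof (sum_at_ge0 D c).
  destruct (Req_dec_T x c) as [<-|Hxc]; [lra|].
  destruct Hc as [Hxc'|Hc]; [congruence|]; pose proof (IH Hc); lra.
Qed.

Lemma sum_at_notin D c : ~ In c D -> sum_at D c = 0.
Proof.
  induction D as [|x D IH]; simpl; [reflexivity|]; intros Hc.
  rewrite IH by tauto; destruct (Req_dec_T x c); [subst; tauto|ring].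
Qed.

Lemma sum_upto_const D c s : c <= s -> (forall x, In x D -> ~ c < x <= s) ->
  sum_upto D s = sum_upto D c.
Proof.
  intros Hcs; induction D as [|x D IH]; simpl; intros Hgap; [reflexivity|].
  rewrite IH by auto.
  destruct (Rle_dec x s), (Rle_dec x c); try lra.
  exfalso; apply (Hgap x); auto; lra.
Qed.

Lemma sum_upto_left D c s : s < c -> (forall x, In x D -> ~ s < x < c) ->
  sum_upto D c = sum_upto D s + sum_at D c.
Proof.
  intros Hsc; induction D as [|x D IH]; simpl; intros Hgap; [ring|].
  rewrite IH by auto.
  destruct (Rle_dec x s), (Rle_dec x c), (Req_dec_T x c); try lra.
  exfalso; apply (Hgap x); auto; lra.
Qed.

End PartialSums.

Lemma exp_mul_exp_opp x : exp x * exp (- x) = 1.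
Proof. rewrite <- exp_plus, Rplus_opp_r; exact exp_0. Qed.

Lemma exp_opp_le_1 x : 0 <= x -> exp (- x) <= 1.
Proof.
  intros Hx; pose proof (exp_mul_exp_opp x); pose proof (exp_ineq1_le x);
    pose proof (exp_pos (- x)); nra.
Qed.

Lemma exp_opp_le_1_minus_half x : 0 <= x <= 1 -> exp (- x) <= 1 - x / 2.
Proof.
  intros Hx.
  assert (Hsq : exp x = exp (x / 2) * exp (x / 2)) by (rewrite <- exp_plus; f_equal; field).
  assert (Hhalf := exp_ineq1_le (x / 2)).
  pose proof (exp_mul_exp_opp x); pose proof (exp_pos (- x)).
  (* (1 - x/2) (1 + x/2)^2 >= 1 on [0, 1] *)
  assert (exp x >= (1 + x / 2) * (1 + x / 2)) by (rewrite Hsq; nra).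
  nra.
Qed.

Lemma derivable_pt_lim_exp_affine a b x :
  derivable_pt_lim (fun t => exp (a * (t - b))) x (a * exp (a * (x - b))).
Proof.
  rewrite Rmult_comm.
  apply (derivable_pt_lim_comp (fun t => a * (t - b)) exp); [|apply derivable_pt_lim_exp].
  assert (Hlin := derivable_pt_lim_mult (fun _ => a) (fun t => t - b) x 0 (1 - 0)
    (derivable_pt_lim_const a x)
    (derivable_pt_lim_minus id (fun _ => b) x 1 0
       (derivable_pt_lim_id x) (derivable_pt_lim_const b x))).
  cbv beta in Hlin; replace (0 * (x - b) + a * (1 - 0)) with a in Hlin by ring.
  exact Hlin.
Qed.

Section JumpComparison.

Variables (phi phim phi' : R -> R) (D : list R) (tau nu gamma : R).
Hypothesis nu_gt0 : 0 < nu.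
Hypothesis phi_rc : forall t, tau <= t < tau + 1 -> right_cont_at phi t.
Hypothesis phi_cont : forall t, tau < t < tau + 1 -> ~ In t D -> continuity_pt phi t.
Hypothesis phi_end : ~ In (tau + 1) D -> left_limit phi (tau + 1) (phi (tau + 1)).
Hypothesis phi_left : forall t, In t D -> left_limit phi t (phim t).
Hypothesis phi_diff : forall t, tau < t < tau + 1 -> ~ In t D ->
  derivable_pt_lim phi t (phi' t).
Hypothesis phi_deriv : forall t, tau < t < tau + 1 -> ~ In t D ->
  phi' t <= - nu * phi t + gamma.

Let g := gamma / nu.
Let jump x := Rmax 0 (phi x - phim x).
Let K := sum_upto jump D.
Let weight t := exp (nu * (t - tau)).
Let shifted k t := weight t * (phi t + k).
Let w t := weight t * (phi t - g - K t).

Lemma jump_ge0 x : 0 <= jump x.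
Proof. apply Rmax_l. Qed.

Lemma weight_continuity_pt t : continuity_pt weight t.
Proof. apply derivable_continuous_pt; eexists; apply derivable_pt_lim_exp_affine. Qed.

Lemma shifted_nonincreasing k a b : k <= - g ->
  (forall x, a < x < b -> tau < x < tau + 1 /\ ~ In x D) ->
  forall x y, a < x -> x <= y -> y < b -> shifted k y <= shifted k x.
Proof.
  intros Hk Hab.
  apply (nonincreasing_of_derivative_nonpos _
           (fun x => nu * weight x * (phi x + k) + weight x * phi' x)).
  intros x Hx; destruct (Hab x Hx) as [Hx' HxD]; split.
  - apply (derivable_pt_lim_mult weight (fun t => phi t + k)).
    + apply derivable_pt_lim_exp_affine.
    + replace (phi' x) with (phi' x + 0) by ring.
      apply derivable_pt_lim_plus; [exact (phi_diff x Hx' HxD)|apply derivable_pt_lim_const].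
  - assert (Hd := phi_deriv x Hx' HxD).
    assert (Hw : 0 < weight x) by apply exp_pos.
    assert (nu * g = gamma) by (unfold g; field; lra).
    assert (Hk' : nu * k + gamma <= 0) by nra.
    nra.
Qed.

Lemma weighted_right_step c : tau <= c < tau + 1 ->
  exists d, 0 < d /\ forall s, c < s < c + d -> w s <= w c.
Proof.
  intros Hc; destruct (finite_set_isolated D c) as [d1 [Hd1 Hiso]].
  set (d := Rmin d1 (tau + 1 - c)).
  assert (Hdd1 : d <= d1) by apply Rmin_l.
  assert (Hdtau : d <= tau + 1 - c) by apply Rmin_r.
  assert (Hd : 0 < d) by (apply Rmin_pos; lra).
  assert (Hgap : forall x, In x D -> ~ c < x < c + d).
  { intros x Hx Hcx; assert (Hxc : x <> c) by lra.
    assert (Hfar := Hiso x Hx Hxc); rewrite Rabs_right in Hfar by lra; lra. }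
  exists d; split; [exact Hd|]; intros s Hs.
  set (k := - g - K c).
  assert (Hw : forall r, c <= r < c + d -> w r = shifted k r).
  { intros r Hr; unfold w, shifted, k, K.
    rewrite (sum_upto_const jump D c r) by (lra || (intros x Hx ?; apply (Hgap x Hx); lra)).
    ring. }
  rewrite (Hw s), (Hw c) by lra.
  apply right_cont_at_le; [lra| |].
  - apply right_cont_at_limit1_in, limit1_in_scale_shift;
      [apply weight_continuity_pt|apply right_cont_at_limit1_in, phi_rc; exact Hc].
  - intros r Hr; apply (shifted_nonincreasing k c (c + d)); try lra.
    + pose proof (sum_upto_ge0 jump jump_ge0 D c); unfold k, K; lra.
    + intros x Hx; split; [lra|intro HxD; exact (Hgap x HxD Hx)].
Qed.

Lemma left_limit_ge_jump c : tau < c <= tau + 1 ->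
  exists L, left_limit phi c L /\ phi c - sum_at jump D c <= L.
Proof.
  intros Hc; destruct (in_dec Req_dec_T c D) as [HcD|HcD].
  - exists (phim c); split; [exact (phi_left c HcD)|].
    pose proof (sum_at_ge jump jump_ge0 D c HcD); pose proof (Rmax_r 0 (phi c - phim c)).
    unfold jump in *; lra.
  - exists (phi c); rewrite sum_at_notin by exact HcD; split; [|lra].
    destruct (Req_dec_T c (tau + 1)) as [->|Hne]; [exact (phi_end HcD)|].
    apply left_limit_continuity_pt, phi_cont; [lra|exact HcD].
Qed.

Lemma weighted_left_step B c : tau < c <= tau + 1 ->
  (exists d, 0 < d /\ forall s, c - d < s < c -> w s <= B) -> w c <= B.
Proof.
  intros Hc [d0 [Hd0 Hle]]; destruct (finite_set_isolated D c) as [d1 [Hd1 Hiso]].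
  destruct (left_limit_ge_jump c Hc) as [L [HL HLc]].
  set (k := - g - K c + sum_at jump D c).
  assert (Hlim : weight c * (L + k) <= B).
  { apply (left_limit_le (shifted k) c).
    - apply left_limit_limit1_in, limit1_in_scale_shift;
        [apply weight_continuity_pt|apply left_limit_limit1_in, HL].
    - exists (Rmin d0 d1); split; [apply Rmin_pos; lra|].
      pose proof (Rmin_l d0 d1); pose proof (Rmin_r d0 d1).
      intros s Hs; rewrite <- (Hle s) by lra.
      assert (Hgap : forall x, In x D -> ~ s < x < c).
      { intros x Hx Hsx; assert (Hxc : x <> c) by lra.
        assert (Hfar := Hiso x Hx Hxc); rewrite Rabs_left in Hfar by lra; lra. }
      unfold shifted, w, k, K; rewrite (sum_upto_left jump D c s) by (lra || exact Hgap).
      right; ring. }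
  assert (Hw : 0 < weight c) by apply exp_pos.
  apply Rle_trans with (weight c * (L + k)); [|exact Hlim].
  apply Rmult_le_compat_l; [lra|]; unfold k; lra.
Qed.

Lemma weighted_bound t : tau <= t <= tau + 1 -> w t <= phi tau - g.
Proof.
  apply real_induction; [lra| |exact weighted_right_step|exact (weighted_left_step _)].
  unfold w, weight; rewrite Rminus_diag, Rmult_0_r, exp_0, Rmult_1_l.
  pose proof (sum_upto_ge0 jump jump_ge0 D tau); unfold K; lra.
Qed.

Hypothesis gamma_ge0 : 0 <= gamma.

Lemma phi_le_decay t : tau <= t <= tau + 1 ->
  phi t <= exp (- (nu * (t - tau))) * phi tau + gamma + jump_sum phi phim D.
Proof.
  intros Ht; set (x := nu * (t - tau)).
  assert (Hx : x <= nu) by (unfold x; nra).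
  assert (Hbound : phi t - g - K t <= exp (- x) * (phi tau - g)).
  { apply Rmult_le_reg_l with (exp x); [apply exp_pos|].
    rewrite <- Rmult_assoc, exp_mul_exp_opp, Rmult_1_l; exact (weighted_bound t Ht). }
  assert (Hg : nu * g = gamma) by (unfold g; field; lra).
  assert (Hg0 : 0 <= g) by (unfold g, Rdiv; apply Rmult_le_pos; [|left; apply Rinv_0_lt_compat]; lra).
  assert (HK : K t <= jump_sum phi phim D) by apply (sum_upto_le_total jump jump_ge0).
  assert (Hdecay : g * (1 - exp (- x)) <= gamma).
  { pose proof (exp_ineq1_le (- x)); rewrite <- Hg, (Rmult_comm nu); apply Rmult_le_compat_l; lra. }
  lra.
Qed.

End JumpComparison.

Lemma absorb_jumps phi0 phi1 phip J nu gamma M mu a1 a2 a3 :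
  0 <= phi0 -> 0 < nu -> 0 <= mu * a1 < 1 ->
  phi1 <= (1 - nu / 2) * phi0 + gamma + J ->
  phip <= phi0 + gamma + J ->
  J <= mu * (a1 * phip + a2 * phi0 + a3 * M) ->
  mu * (a1 * (1 + mu * a2) / (1 - mu * a1) + a2) <= nu / 8 ->
  phi0 >= 8 * mu / nu * a3 * M * (1 / (1 - mu * a1)) ->
  phi1 <= (1 - nu / 4) * phi0 + gamma / (1 - mu * a1).
Proof.
  intros Hphi0 Hnu Hmua1 H1 Hsup HJ Hsmall Hbig.
  set (c := 1 - mu * a1) in *.
  assert (Hc : 0 < c) by (unfold c; lra).
  assert (Hsmall' : mu * (a1 + a2) <= c * nu / 8).
  { replace (mu * (a1 + a2)) with (c * (mu * (a1 * (1 + mu * a2) / c + a2)))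
      by (unfold c; field; lra).
    replace (c * nu / 8) with (c * (nu / 8)) by field; apply Rmult_le_compat_l; lra. }
  assert (Hbig' : mu * a3 * M <= c * nu / 8 * phi0).
  { replace (mu * a3 * M) with (c * nu / 8 * (8 * mu / nu * a3 * M * (1 / c)))
      by (field; lra).
    apply Rmult_le_compat_l; [|lra]; apply Rmult_le_pos; [|lra]; nra. }
  assert (HcJ : c * J <= c * nu / 4 * phi0 + mu * a1 * gamma).
  { assert (mu * a1 * phip <= mu * a1 * (phi0 + gamma + J))
      by (apply Rmult_le_compat_l; lra).
    assert (mu * (a1 + a2) * phi0 <= c * nu / 8 * phi0) by (apply Rmult_le_compat_r; lra).
    unfold c in *; nra. }
  assert (HJ' : J <= nu / 4 * phi0 + mu * a1 * gamma / c).
  { apply Rmult_le_reg_l with c; [exact Hc|].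
    replace (c * (nu / 4 * phi0 + mu * a1 * gamma / c))
      with (c * nu / 4 * phi0 + mu * a1 * gamma) by (field; lra); exact HcJ. }
  replace (gamma / c) with (gamma + mu * a1 * gamma / c) by (unfold c; field; lra).
  lra.
Qed.

Theorem mainTheorem13
  (phi : R -> R) (tau : R)
  (D : list R) (phim : R -> R) (phi' : R -> R) (phip : R)
  (nu gamma M mu a1 a2 a3 : R)
  (HDnodup : NoDup D)
  (HDin : forall t, In t D -> tau < t <= tau + 1)
  (Hrc : forall t, tau <= t < tau + 1 -> right_cont_at phi t)
  (Hcont : forall t, tau < t < tau + 1 -> ~ In t D -> continuity_pt phi t)
  (Hend : ~ In (tau + 1) D -> left_limit phi (tau + 1) (phi (tau + 1)))
  (Hleft : forall t, In t D -> left_limit phi t (phim t))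
  (HC1 : forall t, tau < t < tau + 1 -> ~ In t D ->
           derivable_pt_lim phi t (phi' t) /\ continuity_pt phi' t)
  (Hphi0 : 0 <= phi tau)
  (Hphip : is_lub (fun y => exists t, tau <= t <= tau + 1 /\ y = phi t) phip)
  (Hnu : 0 < nu <= 1) (Hgamma : 0 <= gamma) (HM : 0 <= M)
  (Hmu : 0 <= mu) (Ha1 : 0 <= a1) (Ha2 : 0 <= a2) (Ha3 : 0 <= a3)
  (Hmua1 : mu * a1 < 1)
  (Hderiv : forall t l, tau < t < tau + 1 -> derivable_pt_lim phi t l ->
              l <= - nu * phi t + gamma)
  (Hjump : jump_sum phi phim D <= mu * (a1 * phip + a2 * phi tau + a3 * M))
  (Hsmall : mu * (a1 * (1 + mu * a2) / (1 - mu * a1) + a2) <= nu / 8)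
  (Hbig : phi tau >= 8 * mu / nu * a3 * M * (1 / (1 - mu * a1))) :
  phi (tau + 1) <= (1 - nu / 4) * phi tau + gamma / (1 - mu * a1).
Proof.
  assert (Hdecay := phi_le_decay phi phim phi' D tau nu gamma (proj1 Hnu) Hrc Hcont Hend Hleft
    (fun t Ht HtD => proj1 (HC1 t Ht HtD))
    (fun t Ht HtD => Hderiv t (phi' t) Ht (proj1 (HC1 t Ht HtD))) Hgamma).
  assert (Hsup : phip <= phi tau + gamma + jump_sum phi phim D).
  { apply Hphip; intros y [t [Ht ->]].
    pose proof (exp_opp_le_1 (nu * (t - tau)) ltac:(nra)).
    pose proof (Hdecay t Ht); nra. }
  assert (Hend_bound : phi (tau + 1) <= (1 - nu / 2) * phi tau + gamma + jump_sum phi phim D).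
  { pose proof (exp_opp_le_1_minus_half nu ltac:(lra)).
    pose proof (Hdecay (tau + 1) ltac:(lra)).
    replace (nu * (tau + 1 - tau)) with nu in * by ring; nra. }
  apply (absorb_jumps (phi tau) _ phip (jump_sum phi phim D) nu gamma M mu a1 a2 a3);
    try assumption; [lra|split; [apply Rmult_le_pos|]; assumption].
Qed.
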